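(* Let $D$ be a positive definite diagonal $n\times n$ matrix, let $1<p\le\infty$ and let $q$ satisfy $\frac1p+\frac1q=1$. Then $$I(p,D)=\Big(\sum_{i=1}^n D_{ii}^{-q}\Big)^{-1/q}.$$ (For $p=\infty$, i.e. the spectral norm, this reads $I(sp,D)=(\sum_i D_{ii}^{-1})^{-1}$.)
   Context: $P(n)$ denotes positive semidefinite complex $n\times n$ matrices and $\circ$ the Hadamard product. $\|\cdot\|_p$ is the Schatten $p$-norm ($\|\cdot\|_\infty$ the spectral norm), and $I(p,A)=\min\{\|A\circ B\|_p: B\in P(n),\ \|B\|_p=1\}$. *)

From HB Require Import structures.
From mathcomp Require Import all_boot all_order all_algebra.
From mathcomp Require Import sesquilinear spectral.
From mathcomp Require Import all_classical all_reals.
From mathcomp Require Import exp.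
From mathcomp Require Import complex.

Set Implicit Arguments.
Unset Strict Implicit.
Unset Printing Implicit Defensive.

Import Order.TTheory GRing.Theory Num.Theory.
Local Open Scope ring_scope.
Local Open Scope classical_set_scope.

Section Defs.
Variable R : realType.
Local Notation C := (R[i]).

Definition adjmx m n (A : 'M[C]_(m, n)) : 'M[C]_(n, m) := (map_mx conjc A)^T.

Definition hadamard m n (A B : 'M[C]_(m, n)) : 'M[C]_(m, n) :=
  \matrix_(i, j) (A i j * B i j).

(* positive semidefinite: Hermitian with nonnegative quadratic form
   (0 <= z in C means z is a nonnegative real) *)
Definition psd n (A : 'M[C]_n) : Prop :=
  adjmx A = A /\ forall v : 'rV[C]_n, 0 <= (v *m A *m adjmx v) 0 0.

(* singular values: square roots of the eigenvalues of A^* A,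
   obtained from the library's spectral decomposition of the
   Hermitian matrix A^* A *)
Definition singval n (A : 'M[C]_n) (i : 'I_n) : R :=
  Num.sqrt (complex.Re (spectral_diag (adjmx A *m A) 0 i)).

Definition schatten (p : \bar R) n (A : 'M[C]_n) : R :=
  match p with
  | r%:E => powR (\sum_i powR (singval A i) r) r^-1
  | +oo%E => \big[Num.max/0]_i singval A i
  | -oo%E => 0
  end.

Definition I_set (p : \bar R) n (A : 'M[C]_n) : set R :=
  [set schatten p (hadamard A B) | B in [set B | psd B /\ schatten p B = 1]].

Definition I (p : \bar R) n (A : 'M[C]_n) : R := inf (I_set p A).

End Defs.

From HB Require Import structures.
From mathcomp Require Import all_boot all_order all_algebra.
From mathcomp Require Import sesquilinear spectral.
From mathcomp Require Import all_classical all_reals.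
From mathcomp Require Import exp.
From mathcomp Require Import complex.

Set Implicit Arguments.
Unset Strict Implicit.
Unset Printing Implicit Defensive.

Import Order.TTheory GRing.Theory Num.Theory.
Local Open Scope ring_scope.
Local Open Scope classical_set_scope.

(* For diagonal D the product D o B is the diagonal matrix diag(d_i b_i), with
   d_i = D_ii > 0 and b_i = B_ii >= 0, so ||D o B||_p is the l^p norm of (d_i b_i).
   For B psd with ||B||_p = 1 one has sum_i b_i = tr B >= ||B||_p = 1, as the
   l^p norm of the eigenvalues is at most their sum.  Hoelder's inequality
   sum_i b_i = sum_i (d_i b_i) d_i^-1 <= ||(d_i b_i)||_p ||(d_i^-1)||_q
   then gives the lower bound (sum_i d_i^-q)^(-1/q).  Equality holds for
   b_i proportional to d_i^-q, and these weights are the diagonal of the rank one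
   projection x^* x with x_i = sqrt b_i, whose Schatten norms are all 1.
   Singular values are defined through one particular spectral decomposition of
   A^* A, so the key matrix fact is that any other unitary diagonalisation
   yields the same values up to permutation. *)

Section RealPowers.
Variable R : realType.

Lemma le_sum_term n (x : 'I_n -> R) j :
  (forall i, 0 <= x i) -> x j <= \sum_i x i.
Proof. by move=> x0; rewrite (bigD1 j) //= lerDl sumr_ge0. Qed.

Lemma powRK (s r : R) : 0 <= s -> r != 0 -> powR (powR s r) r^-1 = s.
Proof. by move=> s0 r0; rewrite -powRrM mulfV // powRr1. Qed.

Lemma powRVK (s r : R) : 0 <= s -> r != 0 -> powR (powR s r^-1) r = s.
Proof. by move=> s0 r0; rewrite -powRrM mulVf // powRr1. Qed.

Lemma powR_le_self (a r : R) : 0 <= a <= 1 -> 1 <= r -> powR a r <= a.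
Proof.
case/andP; rewrite le_eqVlt => /predU1P[<- _|a0 a1] r1.
  by rewrite powR0 // gt_eqF // (lt_le_trans ltr01).
by apply: ge1r_powR; rewrite ?a0.
Qed.

Lemma conjugate_exponent_gt0 (r q : R) : 1 < r -> r^-1 + q^-1 = 1 -> 0 < r /\ 0 < q.
Proof.
move=> r1 rq; have r0 : 0 < r by apply: lt_trans r1.
split => //; rewrite -invr_gt0 (_ : q^-1 = 1 - r^-1) ?subr_gt0 ?invf_lt1 //.
by rewrite -rq addrAC subrr add0r.
Qed.

End RealPowers.

Lemma big_codom (T : Type) (op : SemiGroup.com_law T) (idx : T) n (U : eqType)
    (F : U -> T) (x : 'I_n -> U) :
  \big[op/idx]_(t <- codom x) F t = \big[op/idx]_i F (x i).
Proof. by rewrite codomE big_map big_enum. Qed.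

Section LpNorm.
Variable R : realType.
Implicit Types (r q : R) (n : nat).

(* The vector analogue of [schatten], with the same junk value at [-oo]. *)
Definition lpnorm (p : \bar R) n (x : 'I_n -> R) : R :=
  match p with
  | r%:E => powR (\sum_i powR (x i) r) r^-1
  | +oo%E => \big[Num.max/0]_i x i
  | -oo%E => 0
  end.

Lemma eq_lpnorm p n (x y : 'I_n -> R) : x =1 y -> lpnorm p x = lpnorm p y.
Proof. by move=> /funext ->. Qed.

Lemma lpnorm_perm p n (x y : 'I_n -> R) :
  perm_eq (codom x) (codom y) -> lpnorm p x = lpnorm p y.
Proof.
move=> xy; case: p => [r||]; rewrite /lpnorm; last by [].
  by rewrite -!(big_codom _ _ (fun t : R => powR t r)) (perm_big _ xy).
by rewrite -!(big_codom _ _ (@id R)) (perm_big _ xy).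
Qed.

Lemma lpnorm_ge0 p n (x : 'I_n -> R) : 0 <= lpnorm p x.
Proof. by case: p => [r||]; rewrite /lpnorm ?powR_ge0 ?bigmax_ge_id. Qed.

Lemma lpnorm1 n (x : 'I_n -> R) : (forall i, 0 <= x i) ->
  lpnorm 1%:E x = \sum_i x i.
Proof.
move=> x0; rewrite /lpnorm invr1.
under eq_bigr => i _ do rewrite powRr1 //.
by rewrite powRr1 // sumr_ge0.
Qed.

Lemma lpnorm_01 p n (x : 'I_n -> R) : (0%:E < p)%E ->
  (forall i, x i = 0 \/ x i = 1) -> \sum_i x i = 1 -> lpnorm p x = 1.
Proof.
move=> p0 x01 x1; case: p p0 => [r||] p0; rewrite /lpnorm; last 2 first.
- have /existsP[j /eqP xj1] : [exists j, x j == 1].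
    apply: contraT; rewrite negb_exists => /forallP xn1; move: x1.
    rewrite big1 => [/eqP|i _]; first by rewrite eq_sym oner_eq0.
    by case: (x01 i) (xn1 i) => ->; rewrite ?eqxx.
  apply/le_anti/andP; split; last by rewrite -{1}xj1 le_bigmax.
  by apply: bigmax_le => [|i _]; [exact: ler01 | case: (x01 i) => ->; rewrite ?ler01].
- by move: p0; rewrite ltNge leNye.
rewrite lte_fin in p0.
have -> : \sum_i powR (x i) r = \sum_i x i.
  apply: eq_bigr => i _; case: (x01 i) => ->; first exact: powR0 (lt0r_neq0 p0).
  by rewrite powR1.
by rewrite x1 powR1.
Qed.

Lemma lpnorm_le_sum p n (x : 'I_n -> R) : (1%:E <= p)%E -> (forall i, 0 <= x i) ->
  lpnorm p x <= \sum_i x i.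
Proof.
move=> p1 x0; case: p p1 => [r||] p1; rewrite /lpnorm; last 2 first.
- by apply: bigmax_le => [|i _]; [exact: sumr_ge0 | exact: le_sum_term].
- by move: p1; rewrite leeNy_eq.
rewrite lee_fin in p1; have r0 : 0 < r by apply: lt_le_trans p1.
set T := \sum_i x i; have T0 : 0 <= T by apply: sumr_ge0.
have [Tz|Tn] := eqVneq T 0.
  rewrite Tz big1 ?powR0 ?invr_eq0 ?gt_eqF // => i _.
  by rewrite (psumr_eq0P (fun j _ => x0 j) Tz) // powR0 // gt_eqF.
have Tg : 0 < T by rewrite lt_neqAle eq_sym Tn.
suff sum_le : \sum_i powR (x i) r <= powR T r.
  rewrite -[leRHS](powRK T0 (lt0r_neq0 r0)); apply: ge0_ler_powR => //.
  - by rewrite invr_ge0 ltW.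
  - by rewrite nnegrE sumr_ge0 // => i _; apply: powR_ge0.
  - by rewrite nnegrE powR_ge0.
have -> : powR T r = \sum_i powR T r * (x i / T).
  by rewrite -mulr_sumr -mulr_suml mulfV // mulr1.
apply: ler_sum => i _; rewrite -{1}[x i](divfK Tn) powRM ?divr_ge0 // mulrC.
rewrite ler_wpM2l ?powR_ge0 // powR_le_self // divr_ge0 //=.
by rewrite ler_pdivrMr // mul1r le_sum_term.
Qed.

Lemma lpnorm_fin_eq0 n r (x : 'I_n -> R) : r != 0 -> (forall i, 0 <= x i) ->
  lpnorm r%:E x = 0 -> forall i, x i = 0.
Proof.
move=> r0 x0 /powR_eq0_eq0 S0 i; apply: (@powR_eq0_eq0 _ _ r).
by apply: (psumr_eq0P _ S0) => // j _; apply: powR_ge0.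
Qed.

Lemma sum_powR_div_lpnorm n r (x : 'I_n -> R) : r != 0 -> (forall i, 0 <= x i) ->
  0 < lpnorm r%:E x -> \sum_i powR (x i / lpnorm r%:E x) r = 1.
Proof.
move=> r0 x0 N0; set S := \sum_i powR (x i) r.
have S0 : 0 <= S by apply: sumr_ge0 => i _; apply: powR_ge0.
have Ni : 0 <= (lpnorm r%:E x)^-1 by rewrite invr_ge0 ltW.
under eq_bigr => i _ do rewrite (powRM _ (x0 i) Ni).
rewrite -big_distrl /= -/S -(powR_inv1 (ltW N0)) powRAC powR_inv1; last exact: powR_ge0.
rewrite powRVK // mulfV // ; apply: contraTneq N0 => S00.
by rewrite /lpnorm -/S S00 powR0 ?invr_eq0 // ltxx.
Qed.

Lemma holder_sum n r q (x y : 'I_n -> R) : 1 < r -> r^-1 + q^-1 = 1 ->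
  (forall i, 0 <= x i) -> (forall i, 0 <= y i) ->
  \sum_i x i * y i <= lpnorm r%:E x * lpnorm q%:E y.
Proof.
move=> r1 rq x0 y0; have [r0 q0] := conjugate_exponent_gt0 r1 rq.
set X := lpnorm r%:E x; set Y := lpnorm q%:E y.
have [X0|Xn] := eqVneq X 0.
  rewrite X0 mul0r big1 // => i _.
  by rewrite (lpnorm_fin_eq0 (lt0r_neq0 r0) x0 X0) mul0r.
have [Y0|Yn] := eqVneq Y 0.
  rewrite Y0 mulr0 big1 // => i _.
  by rewrite (lpnorm_fin_eq0 (lt0r_neq0 q0) y0 Y0) mulr0.
have Xg : 0 < X by rewrite lt_neqAle eq_sym Xn lpnorm_ge0.
have Yg : 0 < Y by rewrite lt_neqAle eq_sym Yn lpnorm_ge0.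
have sumX := sum_powR_div_lpnorm (lt0r_neq0 r0) x0 Xg.
have sumY := sum_powR_div_lpnorm (lt0r_neq0 q0) y0 Yg.
rewrite -/X in sumX; rewrite -/Y in sumY; clearbody X Y.
have young i : x i / X * (y i / Y) <= powR (x i / X) r / r + powR (y i / Y) q / q.
  apply: (conjugate_powR _ _ r0 q0 rq).
    exact: divr_ge0 (x0 i) (ltW Xg).
  exact: divr_ge0 (y0 i) (ltW Yg).
have : \sum_i x i / X * (y i / Y) <= 1.
  apply: le_trans (ler_sum _ (fun i _ => young i)) _.
  by rewrite big_split /= -!mulr_suml sumX sumY !mul1r rq.
have -> : \sum_i x i / X * (y i / Y) = (\sum_i x i * y i) / (X * Y).
  by rewrite mulr_suml; apply: eq_bigr => i _; rewrite mulrACA -invfM.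
by rewrite ler_pdivrMr ?mulr_gt0 // mul1r.
Qed.

Lemma holder_sum_max n (x y : 'I_n -> R) :
  (forall i, 0 <= x i) -> (forall i, 0 <= y i) ->
  \sum_i x i * y i <= lpnorm +oo%E x * lpnorm 1%:E y.
Proof.
move=> x0 y0; rewrite lpnorm1 // mulr_sumr; apply: ler_sum => i _.
by rewrite ler_wpM2r // le_bigmax.
Qed.

Lemma holder_lpnorm p q n (x y : 'I_n -> R) : (1%:E < p)%E ->
  (forall r, p = r%:E -> r^-1 + q^-1 = 1) -> (p = +oo%E -> q = 1) ->
  (forall i, 0 <= x i) -> (forall i, 0 <= y i) ->
  \sum_i x i * y i <= lpnorm p x * lpnorm q%:E y.
Proof.
move=> p1 pq_fin pq_inf x0 y0; case: p p1 pq_fin pq_inf => [r||] p1 pq_fin pq_inf.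
- by apply: holder_sum (pq_fin r erefl) x0 y0; rewrite -lte_fin.
- by rewrite pq_inf //; apply: holder_sum_max.
- by move: p1; rewrite ltNge leNye.
Qed.

End LpNorm.

(* The equality case of Hoelder's inequality in the lower bound. *)
Definition optimal_weight (R : realType) (q : R) n (d : 'I_n -> R) i : R :=
  powR (d i) (- q) / \sum_j powR (d j) (- q).

Section OptimalWeights.
Variables (R : realType) (p : \bar R) (q : R) (n : nat) (d : 'I_n -> R).
Hypotheses (p_gt1 : (1%:E < p)%E)
  (pq_fin : forall r : R, p = r%:E -> r^-1 + q^-1 = 1) (pq_inf : p = +oo%E -> q = 1)
  (n_gt0 : (0 < n)%N) (d_gt0 : forall i, 0 < d i).

Let S := \sum_i powR (d i) (- q).

Let S_gt0 : 0 < S.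
Proof.
apply: (lt_le_trans (powR_gt0 _ (d_gt0 (Ordinal n_gt0)))).
by apply: le_sum_term => i; apply: powR_ge0.
Qed.

Let q_gt0 : 0 < q.
Proof.
case: p p_gt1 pq_fin pq_inf => [r||] p1 pqf pqi; last by move: p1; rewrite ltNge leNye.
  by rewrite lte_fin in p1; have [] := conjugate_exponent_gt0 p1 (pqf r erefl).
by rewrite pqi.
Qed.

Lemma lpnorm_weighted_ge (b : 'I_n -> R) : (forall i, 0 <= b i) -> 1 <= \sum_i b i ->
  powR S (- q^-1) <= lpnorm p (fun i => d i * b i).
Proof.
move=> b0 b1; have dV0 i : 0 <= (d i)^-1 by rewrite invr_ge0 ltW.
have normV : lpnorm q%:E (fun i => (d i)^-1) = powR S q^-1.
  rewrite /lpnorm; congr powR; apply: eq_bigr => i _.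
  by rewrite -powR_inv1 ?(ltW (d_gt0 i)) // -powRrM mulN1r.
have G0 : 0 < powR S q^-1 by apply: powR_gt0.
rewrite powRN -(ler_pM2r G0) (mulVf (lt0r_neq0 G0)) -normV.
have db0 i : 0 <= d i * b i by rewrite mulr_ge0 ?(ltW (d_gt0 i)).
have := holder_lpnorm p_gt1 pq_fin pq_inf db0 dV0.
have -> : \sum_i d i * b i * (d i)^-1 = \sum_i b i.
  by apply: eq_bigr => i _; rewrite mulrAC (mulfV (lt0r_neq0 (d_gt0 i))) mul1r.
exact: le_trans.
Qed.

Lemma optimal_weight_ge0 i : 0 <= optimal_weight q d i.
Proof. by apply: divr_ge0; [exact: powR_ge0 | exact: ltW S_gt0]. Qed.

Lemma sum_optimal_weight : \sum_i optimal_weight q d i = 1.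
Proof. by rewrite -mulr_suml; exact: mulfV (lt0r_neq0 S_gt0). Qed.

Lemma lpnorm_optimal_weight :
  lpnorm p (fun i => d i * optimal_weight q d i) = powR S (- q^-1).
Proof.
have S0 := lt0r_neq0 S_gt0; have SV0 : 0 <= S^-1 by rewrite invr_ge0 ltW.
have dw i : d i * optimal_weight q d i = powR (d i) (1 - q) / S.
  rewrite /optimal_weight mulrA powRD ?powRr1 ?(ltW (d_gt0 i)) //.
  by rewrite (lt0r_neq0 (d_gt0 i)) implybT.
case: p p_gt1 pq_fin pq_inf => [r||] p1 pqf pqi; rewrite /lpnorm; last 2 first.
- have q1 := pqi erefl; rewrite q1 in dw *.
  under eq_bigr => i _ do rewrite dw subrr powRr0 mul1r.
  rewrite invr1 powR_inv1 ?(ltW S_gt0) //.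
  apply/le_anti/andP; split; first by apply: bigmax_le => // i _; exact: lexx.
  exact: le_bigmax (Ordinal n_gt0).
- by move: p1; rewrite ltNge leNye.
rewrite lte_fin in p1; have rq := pqf r erefl.
have [r0 _] := conjugate_exponent_gt0 p1 rq.
have qrE : q * r = q + r.
  rewrite -[LHS]mulr1 -rq mulrDr (mulfK (lt0r_neq0 r0)).
  by rewrite [q * r]mulrC (mulfK (lt0r_neq0 q_gt0)).
have expr_r : (1 - q) * r = - q.
  by rewrite mulrBl mul1r qrE opprD addrCA subrr addr0.
have expr_inv : (1 - r) * r^-1 = - q^-1.
  by rewrite mulrBl mul1r (mulfV (lt0r_neq0 r0)) -rq opprD addrA subrr add0r.
under eq_bigr => i _ do rewrite dw (powRM _ (powR_ge0 _ _) SV0) -powRrM expr_r.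
rewrite -mulr_suml -/S -powR_inv1 ?(ltW S_gt0) // -powRrM mulN1r.
rewrite -{1}(powRr1 (ltW S_gt0)) -powRD; last by rewrite S0 implybT.
by rewrite -powRrM expr_inv.
Qed.

End OptimalWeights.

(* Summing indicator functions compares multiplicities. *)
Lemma sums_eq_perm (K : numDomainType) (T : eqType) n (x y : 'I_n -> T) :
  (forall f : T -> K, \sum_i f (x i) = \sum_i f (y i)) -> perm_eq (codom x) (codom y).
Proof.
move=> xy; apply/permP => a.
rewrite -!sum1_count [LHS]big_mkcond [RHS]big_mkcond !big_codom.
by apply/eqP; rewrite -(eqr_nat K) !natr_sum (xy (fun t => (if a t then 1 else 0)%N%:R)).
Qed.

Section UnitarySimilarity.
Local Open Scope sesquilinear_scope.
Variable C : numClosedFieldType.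

Lemma unitarymx_row_norm n (W : 'M[C]_n) i :
  W \is unitarymx -> \sum_j W i j * (W i j)^* = 1.
Proof.
move=> /unitarymxP /matrixP /(_ i i); rewrite !mxE eqxx mulr1n => <-.
by apply: eq_bigr => j _; rewrite !mxE.
Qed.

Lemma unitarymx_col_norm n (W : 'M[C]_n) j :
  W \is unitarymx -> \sum_i W i j * (W i j)^* = 1.
Proof.
rewrite -trmxC_unitary => /unitarymxP /matrixP /(_ j j).
rewrite trmxCK !mxE eqxx mulr1n => <-.
by apply: eq_bigr => i _; rewrite !mxE mulrC.
Qed.

(* The weights [W i j * (W i j)^*] are doubly stochastic and vanish unless
   [d 0 i = e 0 j]. *)
Lemma intertwine_sum n (W : 'M[C]_n) (d e : 'rV[C]_n) (f : C -> C) :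
  W \is unitarymx -> diag_mx d *m W = W *m diag_mx e ->
  \sum_i f (d 0 i) = \sum_j f (e 0 j).
Proof.
move=> Wu dWe.
have de i j : W i j != 0 -> d 0 i = e 0 j.
  move=> Wij; move/matrixP: dWe => /(_ i j).
  rewrite mul_diag_mx mul_mx_diag !mxE => dWe_ij.
  by apply: (mulIf Wij); rewrite dWe_ij mulrC.
transitivity (\sum_i \sum_j W i j * (W i j)^* * f (d 0 i)).
  by apply: eq_bigr => i _; rewrite -mulr_suml unitarymx_row_norm ?mul1r.
transitivity (\sum_i \sum_j W i j * (W i j)^* * f (e 0 j)).
  apply: eq_bigr => i _; apply: eq_bigr => j _.
  by have [->|/de ->] := eqVneq (W i j) 0; rewrite ?mul0r.
rewrite exchange_big; apply: eq_bigr => j _.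
by rewrite -mulr_suml unitarymx_col_norm ?mul1r.
Qed.

Lemma unitary_similar_diag_perm n (P Q : 'M[C]_n) (d e : 'rV[C]_n) :
  P \is unitarymx -> Q \is unitarymx ->
  P^t* *m diag_mx d *m P = Q^t* *m diag_mx e *m Q ->
  perm_eq (codom (d 0)) (codom (e 0)).
Proof.
move=> Pu Qu PQ; apply: sums_eq_perm => f.
have PQu : P *m Q^t* \is unitarymx by rewrite mul_unitarymx ?trmxC_unitary.
apply: (intertwine_sum f PQu).
have dP : diag_mx d *m P = P *m (Q^t* *m diag_mx e *m Q).
  by rewrite -PQ !mulmxA (unitarymxP Pu) mul1mx.
by rewrite mulmxA dP !mulmxA mulmxtVK.
Qed.

End UnitarySimilarity.

Section Schatten.
Local Open Scope sesquilinear_scope.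
Local Open Scope complex_scope.
Variable R : realType.
Local Notation C := R[i].

Lemma adjmxE m n (A : 'M[C]_(m, n)) : adjmx A = A^t*.
Proof. by apply/matrixP => i j; rewrite !mxE. Qed.

Lemma unitarymx1 n : (1%:M : 'M[C]_n) \is unitarymx.
Proof. by apply/unitarymxP; rewrite trmx1 map_mx1 mulmx1. Qed.

Lemma hermitian_spectral_decomp n (A : 'M[C]_n) : A^t* = A ->
  A = (spectralmx A)^t* *m diag_mx (spectral_diag A) *m spectralmx A.
Proof.
move=> Ah; have /orthomx_spectralP {1}-> : A \is normalmx.
  by apply/normalmxP; rewrite Ah.
by rewrite invmx_unitary // spectral_unitarymx.
Qed.

Lemma schatten_lpnorm p n (A : 'M[C]_n) : schatten p A = lpnorm p (singval A).
Proof. by case: p. Qed.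

Lemma schatten_unitary_decomp p n (A Q : 'M[C]_n) (e : 'rV[C]_n) :
  Q \is unitarymx -> adjmx A *m A = Q^t* *m diag_mx e *m Q ->
  schatten p A = lpnorm p (fun j => Num.sqrt (complex.Re (e 0 j))).
Proof.
move=> Qu AtAE; rewrite schatten_lpnorm; apply: lpnorm_perm.
have AtAh : (adjmx A *m A)^t* = adjmx A *m A.
  by rewrite adjmxE trmx_mul map_mxM trmxCK.
have := unitary_similar_diag_perm (spectral_unitarymx _) Qu
  (etrans (esym (hermitian_spectral_decomp AtAh)) AtAE).
move/(perm_map (fun c : C => Num.sqrt (complex.Re c))).
by rewrite !codomE -!map_comp.
Qed.

Lemma schatten_diag p n (c : 'I_n -> R) : (forall i, 0 <= c i) ->
  schatten p (diag_mx (\row_i (c i)%:C)) = lpnorm p c.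
Proof.
move=> c0; rewrite (schatten_unitary_decomp p (unitarymx1 n)
  (e := \row_i ((c i) ^+ 2)%:C)); last first.
  rewrite trmx1 map_mx1 mul1mx mulmx1; apply/matrixP => i j.
  rewrite mul_mx_diag !mxE; have [<-|ij] := eqVneq i j.
    by rewrite !mulr1n conjc_real -rmorphM expr2.
  by rewrite !mulr0n rmorph0 mul0r.
by apply: eq_lpnorm => j; rewrite mxE sqrtr_sqr ger0_norm.
Qed.

Lemma mul_diag_mx_diag n (d e : 'rV[C]_n) :
  diag_mx d *m diag_mx e = diag_mx (\row_j (d 0 j * e 0 j)).
Proof. by apply/matrixP => i j; rewrite mul_diag_mx !mxE mulrnAr. Qed.

Lemma spectral_diagE n (B : 'M[C]_n) : B^t* = B ->
  spectralmx B *m B *m (spectralmx B)^t* = diag_mx (spectral_diag B).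
Proof.
move=> Bh; have Qu := spectral_unitarymx B.
rewrite {2}(hermitian_spectral_decomp Bh) !mulmxA (unitarymxP Qu) mul1mx.
by rewrite mulmxtVK.
Qed.

Lemma spectral_diag_sum n (B : 'M[C]_n) : B^t* = B ->
  \sum_j spectral_diag B 0 j = \sum_j B j j.
Proof.
move=> Bh; rewrite -mxtrace_diag -(spectral_diagE Bh) mxtrace_mulC mulmxA.
by rewrite -[(spectralmx B)^t*]mul1mx (mulmxKtV _ (spectral_unitarymx B) erefl) mul1mx.
Qed.

Lemma Re_ge0 (z : C) : 0 <= z -> 0 <= complex.Re z.
Proof. by case: z => a b; rewrite lecE => /andP[]. Qed.

Lemma mul_ge0_complex (z w : C) : 0 <= z -> 0 <= w ->
  z * w = (complex.Re z * complex.Re w)%:C.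
Proof.
case: z => a b; case: w => c e; rewrite !lecE /= => /andP[/eqP-> _] /andP[/eqP-> _].
by rewrite /= rmorphM.
Qed.

Lemma sqrt_Re_sqr (z : C) : 0 <= z -> Num.sqrt (complex.Re (z * z)) = complex.Re z.
Proof.
case: z => a b; rewrite lecE /= => /andP[/eqP b0 a0].
by rewrite b0 mulr0 subr0 -expr2 sqrtr_sqr ger0_norm.
Qed.

Lemma psd_hermitian n (B : 'M[C]_n) : psd B -> B^t* = B.
Proof. by case=> Bh _; rewrite -adjmxE. Qed.

Lemma psd_diag_ge0 n (B : 'M[C]_n) j : psd B -> 0 <= B j j.
Proof.
case=> _ /(_ (delta_mx 0 j)).
by rewrite -rowE adjmxE trmx_delta map_delta_mx -colE !mxE.
Qed.

Lemma psd_spectral_ge0 n (B : 'M[C]_n) j : psd B -> 0 <= spectral_diag B 0 j.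
Proof.
move=> Bp; have [_ /(_ (row j (spectralmx B)))] := Bp.
rewrite adjmxE tr_row map_col colE mulmxA -colE -!row_mul.
by rewrite (spectral_diagE (psd_hermitian Bp)) !mxE eqxx mulr1n.
Qed.

Lemma unitary_decomp_sqr n (B Q : 'M[C]_n) (e : 'rV[C]_n) : Q \is unitarymx ->
  B = Q^t* *m diag_mx e *m Q -> B *m B = Q^t* *m diag_mx (\row_j (e 0 j * e 0 j)) *m Q.
Proof.
move=> Qu ->; rewrite !mulmxA (mulmxtVK _ Qu).
by rewrite -[_ *m diag_mx e *m diag_mx e]mulmxA mul_diag_mx_diag.
Qed.

Lemma schatten_psd p n (B : 'M[C]_n) : psd B ->
  schatten p B = lpnorm p (fun j => complex.Re (spectral_diag B 0 j)).
Proof.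
move=> Bp; have Bh := psd_hermitian Bp; have Qu := spectral_unitarymx B.
rewrite (schatten_unitary_decomp p Qu
  (e := \row_j (spectral_diag B 0 j * spectral_diag B 0 j))).
  by apply: eq_lpnorm => j; rewrite mxE sqrt_Re_sqr // psd_spectral_ge0.
rewrite adjmxE Bh; apply: unitary_decomp_sqr Qu _.
exact: hermitian_spectral_decomp.
Qed.

Lemma psd_trace n (B : 'M[C]_n) : psd B ->
  \sum_j complex.Re (spectral_diag B 0 j) = \sum_j complex.Re (B j j).
Proof. by move=> Bp; rewrite -!raddf_sum (spectral_diag_sum (psd_hermitian Bp)). Qed.

Lemma spectral_diag_idem n (B : 'M[C]_n) j : B^t* = B -> B *m B = B ->
  spectral_diag B 0 j = 0 \/ spectral_diag B 0 j = 1.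
Proof.
move=> Bh BB; have Qu := spectral_unitarymx B.
have : diag_mx (spectral_diag B) *m diag_mx (spectral_diag B) = diag_mx (spectral_diag B).
  rewrite -(spectral_diagE Bh) !mulmxA (mulmxKtV _ Qu erefl).
  by rewrite -[_ *m B *m B]mulmxA BB.
move/matrixP/(_ j j); rewrite mul_diag_mx_diag !mxE eqxx mulr1n.
move: (spectral_diag B 0 j) => x xx.
have : x * (x - 1) = 0 by rewrite mulrBr mulr1 xx subrr.
by move/eqP; rewrite mulf_eq0 subr_eq0 => /orP[] /eqP; [left | right].
Qed.

End Schatten.

Section HadamardDiagonal.
Local Open Scope sesquilinear_scope.
Local Open Scope complex_scope.
Variable R : realType.
Local Notation C := R[i].

Definition sqrt_row n (b : 'I_n -> R) : 'rV[C]_n := \row_j (Num.sqrt (b j))%:C.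

Definition weight_projector n (b : 'I_n -> R) : 'M[C]_n :=
  adjmx (sqrt_row b) *m sqrt_row b.

Lemma psd_weight_projector n (b : 'I_n -> R) : psd (weight_projector b).
Proof.
rewrite /weight_projector; split; first by rewrite !adjmxE trmx_mul map_mxM trmxCK.
move=> v; set x := sqrt_row b.
have -> : v *m (adjmx x *m x) *m adjmx v = (v *m adjmx x) *m adjmx (v *m adjmx x).
  by rewrite !adjmxE trmx_mul map_mxM trmxCK !mulmxA.
by rewrite mxE big_ord1 !mxE; exact: mulcJ_ge0.
Qed.

Lemma weight_projector_diag n (b : 'I_n -> R) j : 0 <= b j ->
  weight_projector b j j = (b j)%:C.
Proof.
by move=> b0; rewrite !mxE big_ord1 !mxE conjc_real -rmorphM -expr2 sqr_sqrtr.
Qed.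

Lemma weight_projector_idem n (b : 'I_n -> R) : (forall j, 0 <= b j) ->
  \sum_j b j = 1 -> weight_projector b *m weight_projector b = weight_projector b.
Proof.
move=> b0 b1; have unit : sqrt_row b *m adjmx (sqrt_row b) = 1%:M.
  apply/matrixP => i k; rewrite !ord1 !mxE eqxx /= mulr1n.
  transitivity ((\sum_j b j)%:C); last by rewrite b1.
  rewrite rmorph_sum.
  by apply: eq_bigr => j _; rewrite !mxE conjc_real -rmorphM -expr2 sqr_sqrtr.
by rewrite /weight_projector mulmxA -[_ *m sqrt_row b *m _]mulmxA unit mulmx1.
Qed.

Lemma schatten_weight_projector p n (b : 'I_n -> R) : (0%:E < p)%E ->
  (forall j, 0 <= b j) -> \sum_j b j = 1 -> schatten p (weight_projector b) = 1.
Proof.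
move=> p0 b0 b1; have Bp := psd_weight_projector b.
rewrite (schatten_psd p Bp); apply: lpnorm_01 p0 _ _ => [j|].
  have [->|->] := spectral_diag_idem j (psd_hermitian Bp) (weight_projector_idem b0 b1).
  - by left.
  - by right.
rewrite psd_trace //; under eq_bigr => j _ do rewrite weight_projector_diag //.
exact: b1.
Qed.

Lemma schatten_hadamard_diag p n (D B : 'M[C]_n) : is_diag_mx D ->
  (forall i, 0 <= D i i) -> psd B ->
  schatten p (hadamard D B) = lpnorm p (fun j => complex.Re (D j j) * complex.Re (B j j)).
Proof.
move=> /is_diag_mxP Dd D0 Bp.
have -> : hadamard D B = diag_mx (\row_j (complex.Re (D j j) * complex.Re (B j j))%:C).
  apply/matrixP => i k; rewrite !mxE; have [<-|ik] := eqVneq i k.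
    by rewrite mulr1n mul_ge0_complex ?D0 ?psd_diag_ge0.
  by rewrite Dd ?mul0r ?mulr0n.
apply: schatten_diag => j.
by apply: mulr_ge0; apply: Re_ge0; [exact: D0 | exact: psd_diag_ge0].
Qed.

End HadamardDiagonal.

Section DiagonalMinimizer.
Local Open Scope complex_scope.
Variables (R : realType) (n : nat) (D : 'M[R[i]]_n) (p : \bar R) (q : R).
Hypotheses (n_gt0 : (0 < n)%N) (D_diag : is_diag_mx D) (D_gt0 : forall i, 0 < D i i)
  (p_gt1 : (1%:E < p)%E) (pq_fin : forall r : R, p = r%:E -> r^-1 + q^-1 = 1)
  (pq_inf : p = +oo%E -> q = 1).

Let d i := complex.Re (D i i).

Let d_gt0 i : 0 < d i.
Proof. by move: (D_gt0 i); rewrite ltcE => /andP[]. Qed.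

Let D_ge0 i : 0 <= D i i.
Proof. exact: ltW. Qed.

Lemma hadamard_diag_schatten_ge B : psd B -> schatten p B = 1 ->
  powR (\sum_i powR (d i) (- q)) (- q^-1) <= schatten p (hadamard D B).
Proof.
move=> Bp B1; rewrite (schatten_hadamard_diag p D_diag D_ge0 Bp).
apply: (lpnorm_weighted_ge p_gt1 pq_fin pq_inf n_gt0 d_gt0).
  by move=> i; apply: Re_ge0; apply: psd_diag_ge0.
rewrite -(psd_trace Bp) -B1 (schatten_psd p Bp); apply: lpnorm_le_sum (ltW p_gt1) _.
by move=> j; apply: Re_ge0; apply: psd_spectral_ge0.
Qed.

Lemma hadamard_diag_schatten_optimal :
  let B := weight_projector (optimal_weight q d) in
  schatten p B = 1 /\
  schatten p (hadamard D B) = powR (\sum_i powR (d i) (- q)) (- q^-1).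
Proof.
move=> B; have w0 := optimal_weight_ge0 q n_gt0 d_gt0.
have w1 := sum_optimal_weight q n_gt0 d_gt0.
have Bp : psd B := psd_weight_projector _.
split; first by apply: schatten_weight_projector w0 w1; apply: lt_trans p_gt1.
rewrite (schatten_hadamard_diag p D_diag D_ge0 Bp).
rewrite -(lpnorm_optimal_weight p_gt1 pq_fin pq_inf n_gt0 d_gt0).
by apply: eq_lpnorm => j; rewrite weight_projector_diag.
Qed.

End DiagonalMinimizer.

Theorem corollary5p5 (R : realType) (n : nat) (D : 'M[R[i]]_n)
    (p : \bar R) (q : R) :
  (0 < n)%N ->
  is_diag_mx D -> (forall i, 0 < D i i) ->
  (1%:E < p)%E ->
  (forall r : R, p = r%:E -> r^-1 + q^-1 = 1) ->
  (p = +oo%E -> q = 1) ->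
  let v := powR (\sum_i powR (complex.Re (D i i)) (- q)) (- q^-1) in
  I_set p D v /\ I p D = v.
Proof.
move=> n_gt0 D_diag D_gt0 p_gt1 pq_fin pq_inf v.
have [B1 Bv] := hadamard_diag_schatten_optimal n_gt0 D_diag D_gt0 p_gt1 pq_fin pq_inf.
have vI : I_set p D v.
  exists (weight_projector (optimal_weight q (fun i => complex.Re (D i i)))) => //.
  by split => //; apply: psd_weight_projector.
have v_lb : lbound (I_set p D) v.
  move=> _ [B [Bp B1'] <-].
  exact: hadamard_diag_schatten_ge n_gt0 D_diag D_gt0 p_gt1 pq_fin pq_inf B Bp B1'.
split => //; apply/le_anti/andP; split.
  by apply: ge_inf vI; exists v.
by apply: lb_le_inf v_lb; exists v.
Qed.
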